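(* Let $M$ be a dualizable object of a symmetric monoidal category $\mathbf{C}$, let $\Delta\colon M\to M\otimes P$ and $f\colon M\to M$ be morphisms, and let $h\colon P\to P$ satisfy $(f\otimes h)\circ\Delta=\Delta\circ f$. Then $h\circ\operatorname{tr}(\Delta\circ f)=\operatorname{tr}(\Delta\circ f)$, where $\Delta\circ f$ is regarded as a morphism $I\otimes M\to M\otimes P$ and its trace with respect to $M$ is a morphism $I\to P$.
   Context: $\mathbf{C}$ is a symmetric monoidal category with tensor $\otimes$ and unit $I$; associativity and unit isomorphisms are suppressed, and $\mathfrak{s}$ denotes any instance or composite of instances of the symmetry isomorphism. An object $M$ is dualizable if there is an object $M^*$ and maps $\eta\colon I\to M\otimes M^*$ and $\varepsilon\colon M^*\otimes M\to I$ with $(\mathrm{id}_M\otimes\varepsilon)(\eta\otimes\mathrm{id}_M)=\mathrm{id}_M$ and $(\varepsilon\otimes\mathrm{id}_{M^*})(\mathrm{id}_{M^*}\otimes\eta)=\mathrm{id}_{M^*}$. For dualizable $M$ and $f\colon Q\otimes M\to M\otimes P$, the trace of $f$ with respect to $M$ is $\operatorname{tr}(f)\colon Q\to P$, the composite $Q\xrightarrow{\mathrm{id}\otimes\eta}Q\otimes M\otimes M^*\xrightarrow{f\otimes\mathrm{id}}M\otimes P\otimes M^*\xrightarrow{\mathfrak{s}}M^*\otimes M\otimes P\xrightarrow{\varepsilon\otimes\mathrm{id}}P$. *)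

Set Implicit Arguments.
Unset Strict Implicit.

Record SymMonCat := {
  Ob :> Type;
  Hom : Ob -> Ob -> Type;
  comp : forall {A B C : Ob}, Hom B C -> Hom A B -> Hom A C;
  idm : forall (A : Ob), Hom A A;
  comp_assoc : forall A B C D (h : Hom C D) (g : Hom B C) (f : Hom A B),
      comp h (comp g f) = comp (comp h g) f;
  comp_id_l : forall A B (f : Hom A B), comp (idm B) f = f;
  comp_id_r : forall A B (f : Hom A B), comp f (idm A) = f;

  tens : Ob -> Ob -> Ob;
  tensm : forall {A B C D : Ob}, Hom A B -> Hom C D -> Hom (tens A C) (tens B D);
  tensm_id : forall A B, tensm (idm A) (idm B) = idm (tens A B);
  tensm_comp : forall A1 B1 C1 A2 B2 C2
      (g1 : Hom B1 C1) (f1 : Hom A1 B1) (g2 : Hom B2 C2) (f2 : Hom A2 B2),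
      tensm (comp g1 f1) (comp g2 f2) = comp (tensm g1 g2) (tensm f1 f2);
  unit_ob : Ob;

  assoc : forall A B C, Hom (tens (tens A B) C) (tens A (tens B C));
  assoc_inv : forall A B C, Hom (tens A (tens B C)) (tens (tens A B) C);
  assoc_inv_l : forall A B C, comp (assoc_inv A B C) (assoc A B C) = idm _;
  assoc_inv_r : forall A B C, comp (assoc A B C) (assoc_inv A B C) = idm _;
  assoc_nat : forall A A' B B' C C' (f : Hom A A') (g : Hom B B') (h : Hom C C'),
      comp (assoc A' B' C') (tensm (tensm f g) h)
      = comp (tensm f (tensm g h)) (assoc A B C);

  lunit : forall A, Hom (tens unit_ob A) A;
  lunit_inv : forall A, Hom A (tens unit_ob A);
  lunit_inv_l : forall A, comp (lunit_inv A) (lunit A) = idm _;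
  lunit_inv_r : forall A, comp (lunit A) (lunit_inv A) = idm _;
  lunit_nat : forall A B (f : Hom A B),
      comp f (lunit A) = comp (lunit B) (tensm (idm unit_ob) f);

  runit : forall A, Hom (tens A unit_ob) A;
  runit_inv : forall A, Hom A (tens A unit_ob);
  runit_inv_l : forall A, comp (runit_inv A) (runit A) = idm _;
  runit_inv_r : forall A, comp (runit A) (runit_inv A) = idm _;
  runit_nat : forall A B (f : Hom A B),
      comp f (runit A) = comp (runit B) (tensm f (idm unit_ob));

  sym : forall A B, Hom (tens A B) (tens B A);
  sym_nat : forall A A' B B' (f : Hom A A') (g : Hom B B'),
      comp (sym A' B') (tensm f g) = comp (tensm g f) (sym A B);
  sym_inv : forall A B, comp (sym B A) (sym A B) = idm _;

  pentagon : forall A B C D,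
      comp (assoc A B (tens C D)) (assoc (tens A B) C D)
      = comp (tensm (idm A) (assoc B C D))
             (comp (assoc A (tens B C) D) (tensm (assoc A B C) (idm D)));
  triangle : forall A B,
      comp (tensm (idm A) (lunit B)) (assoc A unit_ob B)
      = tensm (runit A) (idm B);
  hexagon : forall A B C,
      comp (assoc B C A) (comp (sym A (tens B C)) (assoc A B C))
      = comp (tensm (idm B) (sym A C))
             (comp (assoc B A C) (tensm (sym A B) (idm C)))
}.

Arguments Hom {s}.
Arguments comp {s A B C}.
Arguments idm {s}.
Arguments tens {s}.
Arguments tensm {s A B C D}.
Arguments unit_ob {s}.
Arguments assoc {s}.
Arguments assoc_inv {s}.
Arguments lunit {s}.
Arguments lunit_inv {s}.
Arguments runit {s}.
Arguments runit_inv {s}.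
Arguments sym {s}.

Definition is_dual {C : SymMonCat} (M Ms : C)
    (eta : Hom unit_ob (tens M Ms)) (eps : Hom (tens Ms M) unit_ob) : Prop :=
  comp (runit M) (comp (tensm (idm M) eps)
    (comp (assoc M Ms M) (comp (tensm eta (idm M)) (lunit_inv M)))) = idm M
  /\
  comp (lunit Ms) (comp (tensm eps (idm Ms))
    (comp (assoc_inv Ms M Ms) (comp (tensm (idm Ms) eta) (runit_inv Ms)))) = idm Ms.

Definition trace {C : SymMonCat} {M Ms : C}
    (eta : Hom unit_ob (tens M Ms)) (eps : Hom (tens Ms M) unit_ob)
    {Q P : C} (f : Hom (tens Q M) (tens M P)) : Hom Q P :=
  comp (lunit P)
  (comp (tensm eps (idm P))
  (comp (assoc_inv Ms M P)
  (comp (sym (tens M P) Ms)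
  (comp (tensm f (idm Ms))
  (comp (assoc_inv Q M Ms)
  (comp (tensm (idm Q) eta)
        (runit_inv Q))))))).

Arguments is_dual {C} M Ms eta eps.
Arguments trace {C M Ms} eta eps {Q P} f.

From Stdlib Require Import ssreflect.

(* Write  tr(g) : Q -> P  for the trace of  g : Q (x) M -> M (x) P.  The proof
   combines two general properties of the trace:
   - naturality in the output:  h o tr(g) = tr((1 (x) h) o g);
   - cyclicity (sliding):  tr((u (x) 1) o g) = tr(g o (1 (x) u))  for u : M -> M.
   With g = Delta o f (precomposed with the unitor), the hypothesis
   (f (x) h) o Delta = Delta o f gives
     tr(Delta f) = tr((f (x) 1)(1 (x) h) Delta) = tr((1 (x) h) Delta f) = h o tr(Delta f).
   Cyclicity is proved by moving u across the duality with its mate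
   u^* : M^* -> M^*, which satisfies  eps o (u^* (x) 1) = eps o (1 (x) u)  and
   (1 (x) u^* ) o eta = (u (x) 1) o eta;  only the first zigzag identity is needed. *)

(* Rewriting with an equation between binary composites inside a longer
   composition chain (composition is kept right-associated). *)
Lemma comp2_eq_chain {C : SymMonCat} {A B D E : C}
    {a : Hom B E} {b : Hom A B} {c : Hom D E} {d : Hom A D} :
  comp a b = comp c d -> forall X (k : Hom X A), comp a (comp b k) = comp c (comp d k).
Proof. by move=> e X k; rewrite !comp_assoc e. Qed.

Lemma comp2_eq1_chain {C : SymMonCat} {A B E : C}
    {a : Hom B E} {b : Hom A B} {c : Hom A E} :
  comp a b = c -> forall X (k : Hom X A), comp a (comp b k) = comp c k.
Proof. by move=> e X k; rewrite comp_assoc e. Qed.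

Tactic Notation "rw" uconstr(E) :=
  first [rewrite (comp2_eq_chain E) | rewrite (comp2_eq1_chain E) | rewrite E];
  rewrite -?comp_assoc.

Section TraceInvariance.
Context {C : SymMonCat}.

Lemma assoc_inv_nat {A A' B B' D D' : C} (f : Hom A A') (g : Hom B B') (h : Hom D D') :
  comp (assoc_inv A' B' D') (tensm f (tensm g h))
  = comp (tensm (tensm f g) h) (assoc_inv A B D).
Proof.
  transitivity (comp (assoc_inv _ _ _)
    (comp (tensm f (tensm g h)) (comp (assoc A B D) (assoc_inv A B D)))).
    by rewrite assoc_inv_r comp_id_r.
  by rewrite (comp2_eq_chain (eq_sym (assoc_nat f g h))) comp_assoc assoc_inv_l comp_id_l.
Qed.

Lemma lunit_inv_nat {A B : C} (f : Hom A B) :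
  comp (lunit_inv B) f = comp (tensm (idm unit_ob) f) (lunit_inv A).
Proof.
  transitivity (comp (lunit_inv B) (comp f (comp (lunit A) (lunit_inv A)))).
    by rewrite lunit_inv_r comp_id_r.
  by rewrite (comp2_eq_chain (lunit_nat f)) comp_assoc lunit_inv_l comp_id_l.
Qed.

Lemma runit_inv_nat {A B : C} (f : Hom A B) :
  comp (runit_inv B) f = comp (tensm f (idm unit_ob)) (runit_inv A).
Proof.
  transitivity (comp (runit_inv B) (comp f (comp (runit A) (runit_inv A)))).
    by rewrite runit_inv_r comp_id_r.
  by rewrite (comp2_eq_chain (runit_nat f)) comp_assoc runit_inv_l comp_id_l.
Qed.

Lemma tensm_idl_comp {X A B D : C} (g : Hom B D) (f : Hom A B) :
  tensm (idm X) (comp g f) = comp (tensm (idm X) g) (tensm (idm X) f).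
Proof. by rewrite -tensm_comp comp_id_l. Qed.

Lemma tensm_idr_comp {X A B D : C} (g : Hom B D) (f : Hom A B) :
  tensm (comp g f) (idm X) = comp (tensm g (idm X)) (tensm f (idm X)).
Proof. by rewrite -tensm_comp comp_id_l. Qed.

Lemma tensm_interchange {A A' B B' : C} (f : Hom A A') (g : Hom B B') :
  comp (tensm f (idm B')) (tensm (idm A) g) = comp (tensm (idm A') g) (tensm f (idm B)).
Proof. by rewrite -!tensm_comp !comp_id_l !comp_id_r. Qed.

(* Tensoring with the unit object is faithful, as it is isomorphic to the
   identity functor through the unitors. *)
Lemma tensm_unit_r_inj (A B : C) (f g : Hom A B) :
  tensm f (idm unit_ob) = tensm g (idm unit_ob) -> f = g.
Proof.
  move=> e; rewrite -[f]comp_id_r -[g]comp_id_r -(runit_inv_r A) !comp_assoc.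
  by rewrite runit_nat e -runit_nat.
Qed.

Lemma tensm_unit_l_inj (A B : C) (f g : Hom A B) :
  tensm (idm unit_ob) f = tensm (idm unit_ob) g -> f = g.
Proof.
  move=> e; rewrite -[f]comp_id_r -[g]comp_id_r -(lunit_inv_r A) !comp_assoc.
  by rewrite lunit_nat e -lunit_nat.
Qed.

(* Kelly's coherence identities: the right unitor of a tensor product ... *)
Lemma runit_tens (A B : C) :
  runit (tens A B) = comp (tensm (idm A) (runit B)) (assoc A B unit_ob).
Proof.
  apply: tensm_unit_r_inj.
  have H : comp (assoc A B unit_ob) (tensm (runit (tens A B)) (idm unit_ob))
         = comp (assoc A B unit_ob)
             (tensm (comp (tensm (idm A) (runit B)) (assoc A B unit_ob)) (idm unit_ob)).
  { rewrite -triangle -(tensm_id A B) comp_assoc assoc_nat -comp_assoc pentagon.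
    rewrite comp_assoc -tensm_comp comp_id_l triangle.
    rewrite (comp2_eq_chain (eq_sym (assoc_nat (idm A) (runit B) (idm unit_ob)))).
    by rewrite tensm_idr_comp. }
  have := f_equal (comp (assoc_inv A B unit_ob)) H.
  by rewrite !comp_assoc !assoc_inv_l !comp_id_l.
Qed.

Lemma lunit_tens (A B : C) :
  comp (lunit (tens A B)) (assoc unit_ob A B) = tensm (lunit A) (idm B).
Proof.
  apply: tensm_unit_l_inj.
  pose a := comp (assoc unit_ob (tens unit_ob A) B) (tensm (assoc unit_ob unit_ob A) (idm B)).
  have H : comp (tensm (idm unit_ob) (comp (lunit (tens A B)) (assoc unit_ob A B))) a
         = comp (tensm (idm unit_ob) (tensm (lunit A) (idm B))) a.
  { rewrite /a tensm_idl_comp -comp_assoc -pentagon comp_assoc triangle.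
    rewrite -(tensm_id A B) -assoc_nat (comp2_eq_chain (eq_sym (assoc_nat _ _ _))).
    by rewrite -tensm_idr_comp triangle. }
  have := f_equal (fun k => comp k (comp (tensm (assoc_inv unit_ob unit_ob A) (idm B))
                                     (assoc_inv unit_ob (tens unit_ob A) B))) H.
  rewrite /a -!comp_assoc !(comp_assoc (tensm (assoc _ _ _) _)) -!tensm_comp.
  by rewrite assoc_inv_r !comp_id_l tensm_id comp_id_l !assoc_inv_r !comp_id_r.
Qed.

Lemma lunit_runit_unit : lunit (@unit_ob C) = runit unit_ob.
Proof.
  apply: tensm_unit_r_inj.
  have E : lunit (tens unit_ob unit_ob) = tensm (idm unit_ob) (lunit (@unit_ob C)).
  { have := f_equal (comp (lunit_inv unit_ob)) (lunit_nat (lunit (@unit_ob C))).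
    by rewrite !comp_assoc !lunit_inv_l !comp_id_l. }
  by rewrite -lunit_tens -triangle E.
Qed.

Lemma runit_tens_assoc_inv (A B : C) :
  comp (runit (tens A B)) (assoc_inv A B unit_ob) = tensm (idm A) (runit B).
Proof. by rewrite runit_tens -comp_assoc assoc_inv_r comp_id_r. Qed.

Lemma runit_inv_tens (A B : C) :
  comp (assoc A B unit_ob) (runit_inv (tens A B)) = tensm (idm A) (runit_inv B).
Proof.
  have := f_equal (fun k => comp (tensm (idm A) (runit_inv B)) (comp k (runit_inv (tens A B))))
                  (runit_tens A B).
  rewrite runit_inv_r comp_id_r -!comp_assoc comp_assoc -tensm_comp runit_inv_l.
  by rewrite comp_id_l tensm_id comp_id_l => ->.
Qed.

Lemma lunit_inv_tens (A B : C) :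
  comp (assoc_inv unit_ob A B) (lunit_inv (tens A B)) = tensm (lunit_inv A) (idm B).
Proof.
  have := f_equal (fun k => comp (tensm (lunit_inv A) (idm B))
                   (comp k (comp (assoc_inv unit_ob A B) (lunit_inv (tens A B)))))
                  (lunit_tens A B).
  rewrite -!comp_assoc; rw (assoc_inv_r _ _ _).
  rewrite comp_id_l lunit_inv_r comp_id_r comp_assoc -tensm_comp lunit_inv_l.
  by rewrite comp_id_l tensm_id comp_id_l => <-.
Qed.

Lemma lunit_inv_runit_inv_unit : lunit_inv (@unit_ob C) = runit_inv unit_ob.
Proof.
  rewrite -[lunit_inv _]comp_id_r -(runit_inv_r unit_ob) comp_assoc.
  by rewrite -lunit_runit_unit lunit_inv_l comp_id_l.
Qed.

Lemma triangle_inv (A B : C) :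
  comp (assoc A unit_ob B) (tensm (runit_inv A) (idm B)) = tensm (idm A) (lunit_inv B).
Proof.
  have := f_equal (fun k => comp (tensm (idm A) (lunit_inv B))
                              (comp k (tensm (runit_inv A) (idm B)))) (triangle A B).
  rewrite -!comp_assoc -tensm_comp runit_inv_r comp_id_l tensm_id comp_id_r.
  by rewrite comp_assoc -tensm_comp lunit_inv_l comp_id_l tensm_id comp_id_l.
Qed.

Lemma pentagon_outer_inv (A B D E : C) :
  comp (assoc (tens A B) D E) (tensm (assoc_inv A B D) (idm E))
  = comp (assoc_inv A B (tens D E))
      (comp (tensm (idm A) (assoc B D E)) (assoc A (tens B D) E)).
Proof.
  have := f_equal (fun k => comp (assoc_inv A B (tens D E))
                              (comp k (tensm (assoc_inv A B D) (idm E)))) (pentagon A B D E).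
  rewrite -!comp_assoc -tensm_comp assoc_inv_r comp_id_l tensm_id comp_id_r.
  by rewrite comp_assoc assoc_inv_l comp_id_l.
Qed.

Lemma pentagon_inner_inv (A B D E : C) :
  comp (tensm (idm A) (assoc_inv B D E)) (assoc A B (tens D E))
  = comp (assoc A (tens B D) E)
      (comp (tensm (assoc A B D) (idm E)) (assoc_inv (tens A B) D E)).
Proof.
  have := f_equal (fun k => comp (tensm (idm A) (assoc_inv B D E))
                              (comp k (assoc_inv (tens A B) D E))) (pentagon A B D E).
  rewrite -!comp_assoc assoc_inv_r comp_id_r comp_assoc -tensm_comp assoc_inv_l.
  by rewrite comp_id_l tensm_id comp_id_l.
Qed.

Section Duality.
Variables (M Ms : C) (eta : Hom unit_ob (tens M Ms)) (eps : Hom (tens Ms M) unit_ob).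

Hypothesis zigzag_M :
  comp (runit M) (comp (tensm (idm M) eps)
    (comp (assoc M Ms M) (comp (tensm eta (idm M)) (lunit_inv M)))) = idm M.

Lemma trace_natural_out (Q P : C) (g : Hom (tens Q M) (tens M P)) (h : Hom P P) :
  comp h (trace eta eps g) = trace eta eps (comp (tensm (idm M) h) g).
Proof.
  rewrite /trace; rw (lunit_nat h); rw (eq_sym (tensm_interchange eps h)).
  rewrite -(tensm_id Ms M); rw (eq_sym (assoc_inv_nat _ _ _)).
  rw (eq_sym (sym_nat _ _)); by rw (tensm_idr_comp (tensm (idm M) h) g).
Qed.

Definition mate (u : Hom M M) : Hom Ms Ms :=
  comp (lunit Ms) (comp (tensm eps (idm Ms)) (comp (assoc_inv Ms M Ms)
    (comp (tensm (idm Ms) (comp (tensm u (idm Ms)) eta)) (runit_inv Ms)))).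

Lemma eps_mate (u : Hom M M) :
  comp eps (tensm (mate u) (idm M)) = comp eps (tensm (idm Ms) u).
Proof.
  rewrite /mate !tensm_idr_comp -lunit_tens -!comp_assoc.
  rw (lunit_nat eps); rw (assoc_nat _ _ _); rewrite tensm_id.
  rw (eq_sym (tensm_interchange _ _)); rewrite lunit_runit_unit.
  rw (eq_sym (runit_nat _)); rw (pentagon_outer_inv _ _ _ _).
  rewrite -(tensm_id Ms M); rw (eq_sym (assoc_inv_nat _ _ _)).
  rw (runit_tens_assoc_inv _ _); rw (assoc_nat _ _ _); rewrite ?tensm_id.
  rw (triangle_inv _ _); rewrite -!tensm_idl_comp.
  (* what remains is the zigzag identity for M, with u attached *)
  congr (comp eps (tensm _ _)).
  rewrite tensm_idr_comp -!comp_assoc; rw (assoc_nat _ _ _); rewrite tensm_id.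
  rw (eq_sym (tensm_interchange _ _)); rw (eq_sym (runit_nat _)).
  by rewrite zigzag_M comp_id_r.
Qed.

Lemma mate_eta (u : Hom M M) :
  comp (tensm (idm M) (mate u)) eta = comp (tensm u (idm Ms)) eta.
Proof.
  rewrite /mate !tensm_idl_comp -!comp_assoc -runit_inv_tens -!comp_assoc.
  rw (runit_inv_nat eta); rw (eq_sym (assoc_nat _ _ _)); rewrite tensm_id.
  rw (eq_sym (tensm_interchange _ _)); rewrite -lunit_inv_runit_inv_unit.
  rw (eq_sym (lunit_inv_nat _)); rw (eq_sym (assoc_nat _ _ _)); rewrite ?tensm_id.
  rw (eq_sym (tensm_interchange eta (tensm u (idm Ms)))).
  rw (eq_sym (lunit_inv_nat _)); rw (pentagon_inner_inv _ _ _ _).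
  rewrite -(tensm_id M Ms); rw (assoc_inv_nat _ _ _); rw (lunit_inv_tens _ _).
  rw (eq_sym (assoc_nat _ _ _)); rewrite ?tensm_id; rw (triangle _ _).
  (* what remains is the zigzag identity for M, tensored with (u (x) 1) o eta *)
  move: zigzag_M; rewrite !comp_assoc -!tensm_idr_comp => ->.
  by rewrite comp_id_l.
Qed.

(* Cyclicity: an endomorphism of M can be slid from the output side of g to
   its input side; it is carried around the loop as its mate. *)
Lemma trace_cyclic (Q P : C) (g : Hom (tens Q M) (tens M P)) (u : Hom M M) :
  trace eta eps (comp (tensm u (idm P)) g) = trace eta eps (comp g (tensm (idm Q) u)).
Proof.
  rewrite /trace !tensm_idr_comp -!comp_assoc.
  rw (sym_nat (tensm u (idm P)) (idm Ms)).
  rw (assoc_inv_nat (idm Ms) u (idm P)).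
  rw (eq_sym (tensm_idr_comp eps (tensm (idm Ms) u))).
  rewrite -eps_mate.
  rw (tensm_idr_comp eps (tensm (mate u) (idm M))).
  rw (eq_sym (assoc_inv_nat (mate u) (idm M) (idm P))); rewrite tensm_id.
  rw (eq_sym (sym_nat (idm (tens M P)) (mate u))).
  rw (eq_sym (tensm_interchange g (mate u))).
  rewrite -(tensm_id Q M).
  rw (eq_sym (assoc_inv_nat (idm Q) (idm M) (mate u))).
  rw (eq_sym (tensm_idl_comp (tensm (idm M) (mate u)) eta)).
  rewrite mate_eta.
  rw (tensm_idl_comp (tensm u (idm Ms)) eta).
  by rw (assoc_inv_nat (idm Q) u (idm Ms)); rewrite ?tensm_id.
Qed.

End Duality.
End TraceInvariance.

Theorem mainTheorem5 (C : SymMonCat) (M Ms P : C)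
    (eta : Hom unit_ob (tens M Ms)) (eps : Hom (tens Ms M) unit_ob)
    (Hdual : is_dual M Ms eta eps)
    (Delta : Hom M (tens M P)) (f : Hom M M) (h : Hom P P)
    (Hcomm : comp (tensm f h) Delta = comp Delta f) :
  comp h (trace eta eps (comp (comp Delta f) (lunit M)))
  = trace eta eps (comp (comp Delta f) (lunit M)).
Proof.
  case: Hdual => zigzag_M _.
  have split_fh : tensm f h = comp (tensm f (idm P)) (tensm (idm M) h).
    by rewrite -tensm_comp comp_id_l comp_id_r.
  (* h o tr(Delta f) = tr((1 (x) h) Delta f), and Delta f = (f (x) 1)(1 (x) h) Delta *)
  rewrite trace_natural_out -{2}Hcomm split_fh -!comp_assoc.
  (* slide f around the trace, then move it past the left unitor *)
  rewrite trace_cyclic // -!comp_assoc -lunit_nat.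
  by rewrite !comp_assoc.
Qed.
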